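(* Let $\beta\ge0$, $\gamma>0$, $\lambda>0$ with $\beta\gamma<1$, and let $d\ge1$ be an integer. For any vector $\mathbf{x} \in \mathbb{R}_{\geq 0}^d$ there exists $\overline{x} \geq 0$ such that $$\sum_{i=1}^d h(x_i) \leq d \cdot h(\overline{x}) \quad \text{and} \quad F_d(\mathbf{x}) = F_d(\overline{x},\ldots,\overline{x}),$$ where $h(x) = \frac{(1-\beta\gamma)x}{(\beta x+1)(x+\gamma)}$ and $F_d(\mathbf x)=\lambda\prod_{i=1}^d\frac{\beta x_i+1}{x_i+\gamma}$. *)

From Stdlib Require Import Reals.
Open Scope R_scope.

Definition h (beta gamma x : R) : R :=
  (1 - beta * gamma) * x / ((beta * x + 1) * (x + gamma)).

(* sum_{i=1}^d f(x_i), vector indexed by i = 0..d-1 *)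
Fixpoint sumd (d : nat) (f : nat -> R) : R :=
  match d with O => 0 | S n => sumd n f + f n end.

Fixpoint prodd (d : nat) (f : nat -> R) : R :=
  match d with O => 1 | S n => prodd n f * f n end.

Definition F (beta gamma lambda : R) (d : nat) (x : nat -> R) : R :=
  lambda * prodd d (fun i => (beta * x i + 1) / (x i + gamma)).

(** With u_i = (beta x_i + 1)/(x_i + gamma), the value F_d(x) depends only on
    the product of the u_i, while h(x_i) = (1 + beta gamma - beta/u_i - gamma u_i)/(1 - beta gamma).
    Replacing every u_i by their geometric mean u keeps the product, and by AM-GM applied
    to the u_i and to the 1/u_i it can only increase the sum of h.  The map
    y |-> (beta y + 1)/(y + gamma) sends [0, oo) into (beta, 1/gamma], where it has the
    explicit inverse u |-> (1 - gamma u)/(u - beta); since u lies in that interval too,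
    its preimage is the required xbar >= 0. *)
From Stdlib Require Import Reals Lra Lia.
Open Scope R_scope.

Lemma sumd_ext d f g :
  (forall i, (i < d)%nat -> f i = g i) -> sumd d f = sumd d g.
Proof.
  induction d as [|d IH]; intros Hfg; simpl; [reflexivity|].
  rewrite IH by (intros; apply Hfg; lia).
  rewrite Hfg by lia; reflexivity.
Qed.

Lemma sumd_le d f g :
  (forall i, (i < d)%nat -> f i <= g i) -> sumd d f <= sumd d g.
Proof.
  induction d as [|d IH]; intros Hfg; simpl; [lra|].
  assert (f d <= g d) by (apply Hfg; lia).
  assert (sumd d f <= sumd d g) by (apply IH; intros; apply Hfg; lia).
  lra.
Qed.

Lemma sumd_lt d f g : (0 < d)%nat ->
  (forall i, (i < d)%nat -> f i < g i) -> sumd d f < sumd d g.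
Proof.
  induction d as [|d IH]; intros Hd Hfg; simpl; [lia|].
  assert (f d < g d) by (apply Hfg; lia).
  destruct d as [|d]; [simpl; lra|].
  assert (sumd (S d) f < sumd (S d) g) by (apply IH; [lia | intros; apply Hfg; lia]).
  lra.
Qed.

Lemma sumd_plus d f g :
  sumd d (fun i => f i + g i) = sumd d f + sumd d g.
Proof. induction d as [|d IH]; simpl; [lra | rewrite IH; ring]. Qed.

Lemma sumd_affine d a b f :
  sumd d (fun i => a + b * f i) = INR d * a + b * sumd d f.
Proof.
  induction d as [|d IH]; cbn [sumd]; [simpl; ring|].
  rewrite IH, S_INR; ring.
Qed.

Lemma sumd_const d c : sumd d (fun _ => c) = INR d * c.
Proof.
  rewrite (sumd_ext d _ (fun _ => c + 0 * 0)) by (intros; ring).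
  rewrite sumd_affine; ring.
Qed.

Lemma prodd_const d c : prodd d (fun _ => c) = c ^ d.
Proof. induction d as [|d IH]; simpl; [reflexivity | rewrite IH; ring]. Qed.

Lemma prodd_exp_sumd_ln d u : (forall i, (i < d)%nat -> 0 < u i) ->
  prodd d u = exp (sumd d (fun i => ln (u i))).
Proof.
  induction d as [|d IH]; intros Hu; simpl; [now rewrite exp_0|].
  rewrite exp_plus, <- IH, exp_ln by (intros; apply Hu; lia).
  reflexivity.
Qed.

(** The geometric mean; for [d = 0] it is the junk value [exp (0 / 0) = 1]. *)
Definition gmean (d : nat) (u : nat -> R) : R :=
  exp (sumd d (fun i => ln (u i)) / INR d).

Section GeometricMean.

Variables (d : nat) (u : nat -> R).
Hypothesis d_pos : (0 < d)%nat.
Hypothesis u_pos : forall i, (i < d)%nat -> 0 < u i.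

Let INR_d_pos : 0 < INR d.
Proof. apply lt_0_INR; lia. Qed.

Lemma gmean_pos : 0 < gmean d u.
Proof. apply exp_pos. Qed.

Lemma prodd_gmean : prodd d u = gmean d u ^ d.
Proof.
  rewrite <- prodd_const, !prodd_exp_sumd_ln by (intros; apply u_pos || apply gmean_pos; auto).
  unfold gmean; rewrite sumd_const, ln_exp.
  f_equal; field; lra.
Qed.

(* Tangent line of exp at the mean L of the ln (u i): u i >= G (1 + ln (u i) - L). *)
Lemma gmean_le_sumd : INR d * gmean d u <= sumd d u.
Proof.
  set (L := sumd d (fun i => ln (u i)) / INR d).
  set (G := gmean d u).
  assert (HG : 0 < G) by apply gmean_pos.
  apply Rle_trans with (sumd d (fun i => G * (1 - L) + G * ln (u i))).
  - rewrite sumd_affine.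
    replace (sumd d (fun i => ln (u i))) with (INR d * L) by (unfold L; field; lra).
    lra.
  - apply sumd_le; intros i Hi.
    assert (Hui : u i = G * exp (ln (u i) - L)).
    { unfold G, gmean; fold L.
      unfold Rminus; rewrite exp_plus, exp_Ropp, exp_ln by auto.
      field; apply Rgt_not_eq, exp_pos. }
    pose proof (exp_ineq1_le (ln (u i) - L)).
    rewrite Hui at 2; nra.
Qed.

Lemma gmean_inv : gmean d (fun i => / u i) = / gmean d u.
Proof.
  unfold gmean; rewrite <- exp_Ropp.
  rewrite (sumd_ext d _ (fun i => 0 + -1 * ln (u i))).
  - rewrite sumd_affine; f_equal; field; lra.
  - intros i Hi; rewrite ln_Rinv by auto; ring.
Qed.

Lemma gmean_gt a : 0 <= a -> (forall i, (i < d)%nat -> a < u i) -> a < gmean d u.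
Proof.
  intros [Ha | <-] Hau; [|apply gmean_pos].
  assert (Hsum : INR d * ln a < sumd d (fun i => ln (u i))).
  { rewrite <- sumd_const; apply sumd_lt; auto.
    intros i Hi; apply ln_increasing; auto. }
  unfold gmean; rewrite <- (exp_ln a) by exact Ha.
  apply exp_increasing.
  apply Rmult_lt_reg_l with (INR d); [lra|].
  replace (INR d * (sumd d (fun i => ln (u i)) / INR d)) with (sumd d (fun i => ln (u i)))
    by (field; lra).
  exact Hsum.
Qed.

Lemma gmean_le b : (forall i, (i < d)%nat -> u i <= b) -> gmean d u <= b.
Proof.
  intros Hub.
  apply Rmult_le_reg_l with (INR d); [lra|].
  rewrite <- (sumd_const d b).
  apply Rle_trans with (sumd d u); [apply gmean_le_sumd | apply sumd_le; exact Hub].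
Qed.

End GeometricMean.

Lemma sumd_concave_le_gmean d u a b c : (0 < d)%nat ->
  (forall i, (i < d)%nat -> 0 < u i) -> 0 <= b -> 0 <= c ->
  sumd d (fun i => a - b / u i - c * u i)
  <= INR d * (a - b / gmean d u - c * gmean d u).
Proof.
  intros Hd Hu Hb Hc.
  rewrite (sumd_ext d _ (fun i => (a + - b * / u i) + (0 + - c * u i)))
    by (intros; unfold Rdiv; ring).
  rewrite sumd_plus, !sumd_affine.
  pose proof (gmean_le_sumd d u Hd Hu) as Hmean.
  assert (Hinv : INR d * / gmean d u <= sumd d (fun i => / u i)).
  { rewrite <- gmean_inv by auto.
    apply gmean_le_sumd; auto.
    intros i Hi; apply Rinv_0_lt_compat; auto. }
  unfold Rdiv; nra.
Qed.

Definition mobius (beta gamma y : R) : R := (beta * y + 1) / (y + gamma).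

Definition mobius_inv (beta gamma u : R) : R := (1 - gamma * u) / (u - beta).

Section Mobius.

Variables beta gamma : R.
Hypothesis beta_ge0 : 0 <= beta.
Hypothesis gamma_pos : 0 < gamma.
Hypothesis beta_gamma_lt1 : beta * gamma < 1.

Lemma mobius_gt y : 0 <= y -> beta < mobius beta gamma y.
Proof.
  intros Hy; unfold mobius.
  apply Rmult_lt_reg_r with (y + gamma); [lra|].
  unfold Rdiv; rewrite Rmult_assoc, Rinv_l by lra.
  nra.
Qed.

Lemma mobius_pos y : 0 <= y -> 0 < mobius beta gamma y.
Proof. intros Hy; pose proof (mobius_gt y Hy); lra. Qed.

Lemma mobius_le y : 0 <= y -> mobius beta gamma y <= / gamma.
Proof.
  intros Hy; unfold mobius.
  apply Rmult_le_reg_r with (gamma * (y + gamma)); [nra|].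
  replace ((beta * y + 1) / (y + gamma) * (gamma * (y + gamma))) with (gamma * (beta * y + 1))
    by (field; lra).
  replace (/ gamma * (gamma * (y + gamma))) with (y + gamma) by (field; lra).
  nra.
Qed.

Lemma mobius_invK u : beta < u -> mobius beta gamma (mobius_inv beta gamma u) = u.
Proof.
  intros Hu; unfold mobius, mobius_inv.
  replace ((1 - gamma * u) / (u - beta) + gamma) with ((1 - beta * gamma) / (u - beta))
    by (field; lra).
  field; lra.
Qed.

Lemma mobius_inv_ge0 u : beta < u -> u <= / gamma -> 0 <= mobius_inv beta gamma u.
Proof.
  intros Hbu Hug; unfold mobius_inv.
  assert (gamma * u <= 1).
  { apply Rmult_le_reg_l with (/ gamma); [apply Rinv_0_lt_compat; lra|].
    replace (/ gamma * (gamma * u)) with u by (field; lra).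
    lra. }
  apply Rmult_le_pos; [lra | left; apply Rinv_0_lt_compat; lra].
Qed.

Lemma h_mobius y : 0 <= y ->
  h beta gamma y
  = (1 + beta * gamma) / (1 - beta * gamma)
    - beta / (1 - beta * gamma) / mobius beta gamma y
    - gamma / (1 - beta * gamma) * mobius beta gamma y.
Proof.
  intros Hy; unfold h, mobius.
  assert (beta * y + 1 <> 0) by nra.
  field; repeat split; lra.
Qed.

End Mobius.

Theorem lemma3p16 (beta gamma lambda : R) (d : nat) (x : nat -> R) :
  0 <= beta -> 0 < gamma -> 0 < lambda -> beta * gamma < 1 ->
  (1 <= d)%nat ->
  (forall i, (i < d)%nat -> 0 <= x i) ->
  exists xbar : R, 0 <= xbar /\
    sumd d (fun i => h beta gamma (x i)) <= INR d * h beta gamma xbar /\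
    F beta gamma lambda d x = F beta gamma lambda d (fun _ => xbar).
Proof.
  intros Hb Hg _ Hbg Hd Hx.
  set (u := fun i => mobius beta gamma (x i)).
  assert (Hu : forall i, (i < d)%nat -> 0 < u i) by (intros; apply mobius_pos; auto).
  set (ubar := gmean d u).
  assert (Hbu : beta < ubar) by (apply gmean_gt; auto; intros; apply mobius_gt; auto).
  assert (Hug : ubar <= / gamma) by (apply gmean_le; auto; intros; apply mobius_le; auto).
  exists (mobius_inv beta gamma ubar).
  split; [apply mobius_inv_ge0; auto|split].
  - rewrite h_mobius, mobius_invK by auto using mobius_inv_ge0.
    rewrite (sumd_ext d _ (fun i => _ - _ / u i - _ * u i)) by (intros; apply h_mobius; auto).
    apply sumd_concave_le_gmean; auto.
    all: unfold Rdiv; apply Rmult_le_pos; [lra | left; apply Rinv_0_lt_compat; lra].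
  - unfold F; f_equal.
    change (prodd d u = prodd d (fun _ => mobius beta gamma (mobius_inv beta gamma ubar))).
    rewrite mobius_invK, prodd_const by auto.
    apply prodd_gmean; auto.
Qed.
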